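(* Let $S>0$, $\lambda>0$, $N>0$ and $\mathcal K\in\mathbb{N}^*$. For every $(N,\mathcal K)$-execution strategy $(n_1,\dots,n_{\mathcal K})$, $$S+\lambda SN\le S_{N,\mathcal K}(n_1,\dots,n_{\mathcal K})\le Se^{\lambda N}$$ and $$S+\tfrac12\lambda S\Big(N-\max_{1\le k\le\mathcal K}n_k\Big)\le\overline S_{N,\mathcal K}(n_1,\dots,n_{\mathcal K})\le S\,\frac{e^{\lambda N}-1}{\lambda N}.$$ Moreover, for fixed $N$ and $\mathcal K$, the maximum of $S_{N,\mathcal K}$ (equivalently of the market impact $I_{N,\mathcal K}=S_{N,\mathcal K}-S$) and the maximum of $\overline S_{N,\mathcal K}$ over all $(N,\mathcal K)$-execution strategies are attained if and only if the strategy is equally sized, $n_1=\dots=n_{\mathcal K}=N/\mathcal K$.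
   Context: Fix $S>0$ and $\lambda>0$. For $N>0$ and $\mathcal K\in\mathbb{N}^*$, an $(N,\mathcal K)$-execution strategy is a tuple $(n_1,\dots,n_{\mathcal K})\in(0,\infty)^{\mathcal K}$ with $\sum_{k=1}^{\mathcal K}n_k=N$. For $k\in\{0,\dots,\mathcal K\}$ its $k$-th price is $S_{N,k}(n_1,\dots,n_{\mathcal K}):=S\Big(1+\sum_{i=1}^{k}\lambda^i\sum_{1\le j_1<\dots<j_i\le k}n_{j_1}\cdots n_{j_i}\Big)=S\prod_{j=1}^k(1+\lambda n_j)$, and its average execution price is $\overline S_{N,\mathcal K}(n_1,\dots,n_{\mathcal K}):=\frac1N\sum_{k=1}^{\mathcal K}n_kS_{N,k-1}(n_1,\dots,n_{\mathcal K})$. *)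

From Stdlib Require Import Reals Lra Lia.
Open Scope R_scope.

Fixpoint psum (f : nat -> R) (k : nat) : R :=
  match k with O => 0 | S k' => psum f k' + f k end.
Fixpoint pprod (f : nat -> R) (k : nat) : R :=
  match k with O => 1 | S k' => pprod f k' * f k end.
Fixpoint pmax (f : nat -> R) (k : nat) : R :=
  match k with O => 0 | S k' => Rmax (pmax f k') (f k) end.

Definition is_strategy (N : R) (K : nat) (n : nat -> R) : Prop :=
  (forall k, (1 <= k <= K)%nat -> 0 < n k) /\ psum n K = N.

Definition price (S0 lam : R) (n : nat -> R) (k : nat) : R :=
  S0 * pprod (fun j => 1 + lam * n j) k.

Definition avg_price (S0 lam N : R) (K : nat) (n : nat -> R) : R :=
  / N * psum (fun k => n k * price S0 lam n (k - 1)) K.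

(* Write [P_K = prod_k (1 + lam n_k)], so that [S_{N,K} = S P_K].  Expanding the product gives
   [1 + lam N + lam^2 e_2 <= P_K], where [e_2 = sum_{j<k} n_j n_k] satisfies
   [2 e_2 = N^2 - sum n_k^2 >= N (N - max n_k)], while [1 + x <= e^x] gives [P_K <= e^{lam N}].
   The average price telescopes: [lam N avg = S_{N,K} - S], so every statement about the average
   price is a statement about [S_{N,K}].  Finally, AM-GM applied to the factors [1 + lam n_k],
   whose mean is [1 + lam N / K], shows that [P_K] is maximal exactly for equal sizes; the
   equality case of AM-GM is obtained by induction on [K] from the strict Bernoulli inequality. *)
From Stdlib Require Import Reals Lra Lia.
Open Scope R_scope.

Lemma range_restrict (P : nat -> Prop) K :
  (forall k, (1 <= k <= S K)%nat -> P k) -> forall k, (1 <= k <= K)%nat -> P k.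
Proof. intros H k Hk; apply H; lia. Qed.

Lemma psum_ge0 n K : (forall k, (1 <= k <= K)%nat -> 0 < n k) -> 0 <= psum n K.
Proof.
  induction K as [|K IH]; intros H; simpl; [lra|].
  pose proof (IH (range_restrict _ _ H)); pose proof (H (S K) ltac:(lia)); lra.
Qed.

Lemma psum_gt0 n K : (1 <= K)%nat -> (forall k, (1 <= k <= K)%nat -> 0 < n k) -> 0 < psum n K.
Proof.
  destruct K as [|K]; intros HK H; [lia|]; simpl.
  pose proof (psum_ge0 n K (range_restrict _ _ H)); pose proof (H (S K) ltac:(lia)); lra.
Qed.

Lemma pprod_gt0 n K : (forall k, (1 <= k <= K)%nat -> 0 < n k) -> 0 < pprod n K.
Proof.
  induction K as [|K IH]; intros H; simpl; [lra|].
  pose proof (IH (range_restrict _ _ H)); pose proof (H (S K) ltac:(lia)); nra.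
Qed.

Lemma pprod_ext f g K : (forall k, (1 <= k <= K)%nat -> f k = g k) -> pprod f K = pprod g K.
Proof.
  induction K as [|K IH]; intros H; simpl; [reflexivity|].
  rewrite (IH (range_restrict _ _ H)), (H (S K) ltac:(lia)); reflexivity.
Qed.

Lemma pprod_const c K : pprod (fun _ => c) K = c ^ K.
Proof. induction K as [|K IH]; simpl; [reflexivity|]. rewrite IH; ring. Qed.

Lemma psum_const c K : psum (fun _ => c) K = INR K * c.
Proof. induction K as [|K IH]; cbn [psum]; [simpl; ring|]. rewrite IH, S_INR; ring. Qed.

Lemma psum_affine a b n K : psum (fun j => a + b * n j) K = INR K * a + b * psum n K.
Proof. induction K as [|K IH]; cbn [psum]; [simpl; ring|]. rewrite IH, S_INR; ring. Qed.

Lemma pprod_affine_le_exp lam n K : 0 < lam -> (forall k, (1 <= k <= K)%nat -> 0 < n k) ->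
  pprod (fun j => 1 + lam * n j) K <= exp (lam * psum n K).
Proof.
  intros hlam; induction K as [|K IH]; intros H; simpl; [rewrite Rmult_0_r, exp_0; lra|].
  pose proof (IH (range_restrict _ _ H)); pose proof (H (S K) ltac:(lia)).
  pose proof (pprod_gt0 (fun j => 1 + lam * n j) K
                ltac:(intros k hk; pose proof (H k ltac:(lia)); nra)).
  rewrite (Rmult_plus_distr_l lam), exp_plus.
  pose proof (exp_ineq1_le (lam * n (S K))).
  apply Rmult_le_compat; nra.
Qed.

Definition esym2 (n : nat -> R) (K : nat) : R := psum (fun k => n k * psum n (k - 1)) K.

Lemma esym2_S n K : esym2 n (S K) = esym2 n K + n (S K) * psum n K.
Proof. unfold esym2; simpl; rewrite Nat.sub_0_r; reflexivity. Qed.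

Lemma esym2_ge0 n K : (forall k, (1 <= k <= K)%nat -> 0 < n k) -> 0 <= esym2 n K.
Proof.
  induction K as [|K IH]; intros H; [unfold esym2; simpl; lra|]. rewrite esym2_S.
  pose proof (IH (range_restrict _ _ H)); pose proof (H (S K) ltac:(lia)).
  pose proof (psum_ge0 n K (range_restrict _ _ H)); nra.
Qed.

Lemma pprod_affine_ge_esym2 lam n K : 0 < lam -> (forall k, (1 <= k <= K)%nat -> 0 < n k) ->
  1 + lam * psum n K + lam ^ 2 * esym2 n K <= pprod (fun j => 1 + lam * n j) K.
Proof.
  intros hlam; induction K as [|K IH]; intros H; [unfold esym2; simpl; lra|].
  rewrite esym2_S; simpl.
  pose proof (IH (range_restrict _ _ H)) as IHK; pose proof (H (S K) ltac:(lia)).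
  pose proof (psum_ge0 n K (range_restrict _ _ H)).
  pose proof (esym2_ge0 n K (range_restrict _ _ H)).
  set (P := pprod (fun j => 1 + lam * n j) K) in *.
  assert (0 <= lam ^ 3 * esym2 n K * n (S K))
    by (apply Rmult_le_pos; [apply Rmult_le_pos; [apply pow_le|]|]; lra).
  assert (0 <= (P - (1 + lam * psum n K + lam ^ 2 * esym2 n K)) * (1 + lam * n (S K)))
    by (apply Rmult_le_pos; nra).
  nra.
Qed.

Lemma double_esym2 n K : 2 * esym2 n K = psum n K ^ 2 - psum (fun k => n k * n k) K.
Proof.
  induction K as [|K IH]; [unfold esym2; simpl; ring|].
  rewrite esym2_S; simpl in *; nra.
Qed.

Lemma psum_sq_le_pmax n K : (forall k, (1 <= k <= K)%nat -> 0 < n k) ->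
  psum (fun k => n k * n k) K <= pmax n K * psum n K /\ 0 <= pmax n K.
Proof.
  induction K as [|K IH]; intros H; simpl; [lra|].
  destruct (IH (range_restrict _ _ H)) as [Hq Hm]; pose proof (H (S K) ltac:(lia)).
  pose proof (psum_ge0 n K (range_restrict _ _ H)).
  pose proof (Rmax_l (pmax n K) (n (S K))); pose proof (Rmax_r (pmax n K) (n (S K))).
  split; nra.
Qed.

Lemma double_esym2_ge n K : (forall k, (1 <= k <= K)%nat -> 0 < n k) ->
  psum n K * (psum n K - pmax n K) <= 2 * esym2 n K.
Proof.
  intros H; rewrite double_esym2; destruct (psum_sq_le_pmax n K H); simpl; nra.
Qed.

Lemma price_telescope S0 lam n K :
  lam * psum (fun k => n k * price S0 lam n (k - 1)) K = price S0 lam n K - S0.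
Proof.
  unfold price; induction K as [|K IH]; simpl in *; [ring|].
  rewrite Nat.sub_0_r, Rmult_plus_distr_l, IH; ring.
Qed.

Lemma avg_price_eq S0 lam N K n : lam <> 0 -> N <> 0 ->
  avg_price S0 lam N K n = (price S0 lam n K - S0) / (lam * N).
Proof. intros; unfold avg_price; rewrite <- price_telescope; field; auto. Qed.

Lemma bernoulli n h : -1 < h -> 1 + INR n * h <= (1 + h) ^ n.
Proof.
  intros Hh; induction n as [|n IH]; [simpl; lra|].
  rewrite S_INR; cbn [pow]; pose proof (pos_INR n).
  assert (0 <= INR n * (h * h)) by (apply Rmult_le_pos; nra).
  assert (0 <= (1 + h) * ((1 + h) ^ n - (1 + INR n * h))) by (apply Rmult_le_pos; lra).
  nra.
Qed.

Lemma bernoulli_strict n h : (1 <= n)%nat -> -1 < h -> h <> 0 ->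
  1 + INR (S n) * h < (1 + h) ^ S n.
Proof.
  intros Hn Hh Hh0; rewrite S_INR; cbn [pow].
  assert (0 < INR n) by (apply lt_0_INR; lia).
  assert (0 < INR n * (h * h)) by (apply Rmult_lt_0_compat; [|apply Rsqr_pos_lt]; auto).
  assert (0 <= (1 + h) * ((1 + h) ^ n - (1 + INR n * h)))
    by (apply Rmult_le_pos; [|pose proof (bernoulli n h Hh)]; lra).
  nra.
Qed.

(* Write the new mean as [y (1 + h)]; then [y^n x = y^(n+1) (1 + (n+1) h)] and Bernoulli applies. *)
Lemma amgm_step n y x : (1 <= n)%nat -> 0 < y -> 0 < x ->
  y ^ n * x <= ((INR n * y + x) / (INR n + 1)) ^ S n /\
  (x <> y -> y ^ n * x < ((INR n * y + x) / (INR n + 1)) ^ S n).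
Proof.
  intros Hn Hy Hx.
  assert (HI : 0 < INR n) by (apply lt_0_INR; lia).
  set (h := (x - y) / ((INR n + 1) * y)).
  assert (Emean : (INR n * y + x) / (INR n + 1) = y * (1 + h)) by (unfold h; field; lra).
  assert (Eprod : y ^ n * x = y ^ S n * (1 + INR (S n) * h))
    by (unfold h; rewrite S_INR; simpl; field; lra).
  assert (Hh : -1 < h).
  { unfold h; apply Rmult_lt_reg_r with ((INR n + 1) * y); [nra|].
    unfold Rdiv; rewrite Rmult_assoc, Rinv_l by nra; nra. }
  assert (Hp : 0 < y ^ S n) by (apply pow_lt; lra).
  rewrite Emean, Eprod, Rpow_mult_distr; split.
  - apply Rmult_le_compat_l; [lra|]. apply bernoulli; lra.
  - intros Hxy; apply Rmult_lt_compat_l; [lra|].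
    apply bernoulli_strict; [lia|lra|].
    unfold h, Rdiv; intros Hc; apply Rmult_integral in Hc as [Hc|Hc].
    + lra.
    + revert Hc; apply Rinv_neq_0_compat; nra.
Qed.

Lemma amgm x K : (1 <= K)%nat -> (forall k, (1 <= k <= K)%nat -> 0 < x k) ->
  pprod x K <= (psum x K / INR K) ^ K /\
  (pprod x K = (psum x K / INR K) ^ K -> forall k, (1 <= k <= K)%nat -> x k = psum x K / INR K).
Proof.
  induction K as [|K IH]; intros HK H; [lia|].
  destruct (Nat.eq_dec K 0) as [->|HK0].
  { simpl; split; [lra|]. intros _ k hk; replace k with 1%nat by lia; lra. }
  destruct (IH ltac:(lia) (range_restrict _ _ H)) as [Hle Heq].
  pose proof (psum_gt0 x K ltac:(lia) (range_restrict _ _ H)).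
  pose proof (pprod_gt0 x K (range_restrict _ _ H)).
  assert (HI : 0 < INR K) by (apply lt_0_INR; lia).
  pose proof (H (S K) ltac:(lia)) as Hx.
  set (y := psum x K / INR K) in *.
  assert (Hy : 0 < y) by (apply Rdiv_lt_0_compat; lra).
  destruct (amgm_step K y (x (S K)) ltac:(lia) Hy Hx) as [Hstep Hstrict].
  assert (Emean : psum x (S K) / INR (S K) = (INR K * y + x (S K)) / (INR K + 1))
    by (rewrite S_INR; cbn [psum]; unfold y; field; lra).
  rewrite Emean; cbn [pprod].
  assert (pprod x K * x (S K) <= y ^ K * x (S K)) by (apply Rmult_le_compat_r; lra).
  split; [lra|]. intros Hall.
  assert (Ex : x (S K) = y)
    by (destruct (Req_dec (x (S K)) y) as [|Hne]; [|specialize (Hstrict Hne)]; lra).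
  assert (Ey : (INR K * y + x (S K)) / (INR K + 1) = y) by (rewrite Ex; field; lra).
  assert (EP : pprod x K = y ^ K) by (apply Rmult_eq_reg_r with (x (S K)); lra).
  rewrite Ey; intros k hk.
  destruct (Nat.eq_dec k (S K)) as [->|hne]; [exact Ex|]. apply (Heq EP); lia.
Qed.

Section Strategies.

Variables (S0 lam N : R) (K : nat).
Hypotheses (hS : 0 < S0) (hlam : 0 < lam) (hN : 0 < N) (hK : (1 <= K)%nat).

Let c := N / INR K.

Lemma INR_K_gt0 : 0 < INR K.
Proof. apply lt_0_INR; lia. Qed.

Lemma is_strategy_equal : is_strategy N K (fun _ => c).
Proof.
  pose proof INR_K_gt0; split.
  - intros; apply Rdiv_lt_0_compat; lra.
  - rewrite psum_const; unfold c; field; lra.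
Qed.

Lemma price_equal n : (forall k, (1 <= k <= K)%nat -> n k = c) ->
  price S0 lam n K = S0 * (1 + lam * c) ^ K.
Proof.
  intros Hn; unfold price; rewrite <- pprod_const; f_equal.
  apply pprod_ext; intros k hk; rewrite Hn; auto.
Qed.

Lemma price_le_equal n : is_strategy N K n ->
  price S0 lam n K <= S0 * (1 + lam * c) ^ K /\
  (price S0 lam n K = S0 * (1 + lam * c) ^ K -> forall k, (1 <= k <= K)%nat -> n k = c).
Proof.
  intros [Hpos Hsum]; pose proof INR_K_gt0.
  assert (Hfac : forall k, (1 <= k <= K)%nat -> 0 < 1 + lam * n k)
    by (intros k hk; pose proof (Hpos k hk); nra).
  destruct (amgm _ K hK Hfac) as [Hle Heq].
  assert (Emean : psum (fun j => 1 + lam * n j) K / INR K = 1 + lam * c)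
    by (rewrite psum_affine, Hsum; unfold c; field; lra).
  rewrite Emean in Hle, Heq; unfold price; split.
  - apply Rmult_le_compat_l; lra.
  - intros Hp k hk.
    assert (Hfacs : 1 + lam * n k = 1 + lam * c)
      by (apply Heq; auto; apply Rmult_eq_reg_l with S0; lra).
    apply Rmult_eq_reg_l with lam; lra.
Qed.

Lemma price_max_iff n : is_strategy N K n ->
  (forall m, is_strategy N K m -> price S0 lam m K <= price S0 lam n K) <->
  (forall k, (1 <= k <= K)%nat -> n k = c).
Proof.
  intros Hn; destruct (price_le_equal n Hn) as [Hle Heq]; split.
  - intros Hmax; apply Heq.
    pose proof (Hmax _ is_strategy_equal); rewrite price_equal in * by auto; lra.
  - intros Hc m Hm; rewrite (price_equal n Hc); apply (price_le_equal m Hm).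
Qed.

Lemma avg_price_le_iff m n :
  avg_price S0 lam N K m <= avg_price S0 lam N K n <-> price S0 lam m K <= price S0 lam n K.
Proof.
  rewrite !avg_price_eq by lra.
  assert (0 < / (lam * N)) by (apply Rinv_0_lt_compat; nra).
  unfold Rdiv; split; intros; nra.
Qed.

Lemma avg_price_max_iff n : is_strategy N K n ->
  (forall m, is_strategy N K m -> avg_price S0 lam N K m <= avg_price S0 lam N K n) <->
  (forall k, (1 <= k <= K)%nat -> n k = c).
Proof.
  intros Hn; rewrite <- price_max_iff by auto.
  split; intros Hmax m Hm; apply avg_price_le_iff; auto.
Qed.

Lemma price_bounds n : is_strategy N K n ->
  S0 + lam * S0 * N + lam ^ 2 * S0 * esym2 n K <= price S0 lam n K /\
  price S0 lam n K <= S0 * exp (lam * N).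
Proof.
  intros [Hpos Hsum]; unfold price.
  pose proof (pprod_affine_ge_esym2 lam n K hlam Hpos).
  pose proof (pprod_affine_le_exp lam n K hlam Hpos).
  rewrite Hsum in *; split; nra.
Qed.

Lemma avg_price_bounds n : is_strategy N K n ->
  S0 + / 2 * lam * S0 * (N - pmax n K) <= avg_price S0 lam N K n /\
  avg_price S0 lam N K n <= S0 * (exp (lam * N) - 1) / (lam * N).
Proof.
  intros Hn; pose proof Hn as [Hpos Hsum].
  destruct (price_bounds n Hn) as [Hlow Hup].
  pose proof (double_esym2_ge n K Hpos) as He; rewrite Hsum in He.
  rewrite avg_price_eq by lra; split.
  - apply Rmult_le_reg_r with (lam * N); [nra|].
    replace ((price S0 lam n K - S0) / (lam * N) * (lam * N)) with (price S0 lam n K - S0)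
      by (field; lra).
    assert (lam ^ 2 * S0 * (N * (N - pmax n K)) <= lam ^ 2 * S0 * (2 * esym2 n K))
      by (apply Rmult_le_compat_l; [apply Rmult_le_pos; [apply pow_le|]|]; lra).
    nra.
  - unfold Rdiv; apply Rmult_le_compat_r; [left; apply Rinv_0_lt_compat; nra|lra].
Qed.

End Strategies.

Theorem theorem5p1 (S0 lam N : R) (K : nat)
  (hS : 0 < S0) (hlam : 0 < lam) (hN : 0 < N) (hK : (1 <= K)%nat) :
  (forall n : nat -> R, is_strategy N K n ->
     S0 + lam * S0 * N <= price S0 lam n K
     /\ price S0 lam n K <= S0 * exp (lam * N)
     /\ S0 + / 2 * lam * S0 * (N - pmax n K) <= avg_price S0 lam N K n
     /\ avg_price S0 lam N K n <= S0 * (exp (lam * N) - 1) / (lam * N))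
  /\
  (forall n : nat -> R, is_strategy N K n ->
     ((forall m : nat -> R, is_strategy N K m -> price S0 lam m K <= price S0 lam n K)
      <-> (forall k, (1 <= k <= K)%nat -> n k = N / INR K)))
  /\
  (forall n : nat -> R, is_strategy N K n ->
     ((forall m : nat -> R, is_strategy N K m ->
         avg_price S0 lam N K m <= avg_price S0 lam N K n)
      <-> (forall k, (1 <= k <= K)%nat -> n k = N / INR K))).
Proof.
  split; [|split].
  - intros n Hn.
    destruct (price_bounds S0 lam N K hS hlam n Hn) as [Hlow Hup].
    pose proof (esym2_ge0 n K (proj1 Hn)).
    assert (0 <= lam ^ 2 * S0 * esym2 n K)
      by (apply Rmult_le_pos; [apply Rmult_le_pos; [apply pow_le|]|]; lra).
    repeat split; try lra; apply (avg_price_bounds S0 lam N K hS hlam hN n Hn).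
  - exact (price_max_iff S0 lam N K hS hlam hN hK).
  - exact (avg_price_max_iff S0 lam N K hS hlam hN hK).
Qed.
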